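(* Let $G$ be a finite group and $p$ a prime number, and let $r=\max\{d((G/p(G))^{\mathrm{ab}}),1\}$. Then there exist subgroups $Q_1,\dots,Q_r$ of $G$, each of which is cyclic-by-$p$, such that $G$ is generated by the union of the conjugacy classes $Q_1^G\cup\dots\cup Q_r^G$, where $Q_i^G=\{gxg^{-1}: g\in G, x\in Q_i\}$.
   Context: $d(H)$ is the minimal number of generators of a finite group $H$, $H^{\mathrm{ab}}$ its abelianization, and $p(H)$ the subgroup generated by the $p$-Sylow subgroups of $H$. A group $Q$ is cyclic-by-$p$ if it has a normal $p$-subgroup $P$ with $Q/P$ cyclic. *)

From mathcomp Require Import all_boot fingroup morphism quotient perm automorphism commutator cyclic pgroup sylow.
Set Implicit Arguments. Unset Strict Implicit. Unset Printing Implicit Defensive.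
Local Open Scope group_scope.

Definition pSylGen (gT : finGroupType) (p : nat) (H : {set gT}) : {set gT} :=
  <<\bigcup_(P in 'Syl_p(H)) P>>.

Definition generates (gT : finGroupType) (H : {set gT}) (s : seq gT) : bool :=
  all (fun x => x \in H) s && (<<[set x in s]>> == H).

Definition has_gen_of_size (gT : finGroupType) (H : {set gT}) (n : nat) : bool :=
  [exists t : n.-tuple gT, generates H t].

Lemma generates_exists (gT : finGroupType) (H : {group gT}) :
  exists n, has_gen_of_size H n.
Proof.
exists (size (enum H)); apply/existsP; exists (in_tuple (enum H)).
rewrite /generates /=.
apply/andP; split; first by apply/allP => x; rewrite mem_enum.
rewrite eqEsubset; apply/andP; split.
  by rewrite gen_subG; apply/subsetP => x; rewrite inE mem_enum.
by rewrite -{1}(genGid H) genS //; apply/subsetP => x; rewrite inE mem_enum.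
Qed.

Definition dgen (gT : finGroupType) (H : {group gT}) : nat :=
  ex_minn (generates_exists H).

Definition abelianization (gT : finGroupType) (H : {group gT}) :=
  (H / H^`(1))%G.

Definition cyclic_by_p (gT : finGroupType) (p : nat) (Q : {group gT}) : Prop :=
  exists P : {group gT}, [/\ P <| Q, p.-group P & cyclic (Q / P)].

Definition conj_closure (gT : finGroupType) (Q G : {set gT}) : {set gT} :=
  \bigcup_(g in G) (Q :^ g).

From mathcomp Require Import all_boot fingroup morphism quotient perm automorphism commutator cyclic pgroup sylow.
Set Implicit Arguments. Unset Strict Implicit. Unset Printing Implicit Defensive.
Local Open Scope group_scope.

(* Write K = p(G), a normal subgroup of G, and r = max(d((G/K)^ab), 1).
   1. Lifting a minimal generating sequence of (G/K)^ab gives g_1..g_r in G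
      with G = <G', K, g_1, .., g_r>  (lift_abelianization_gens).
   2. Key lemma (normal_generation): if K <| G, r > 0 and
      G = <G', K, g_1, .., g_r>, then G = <K, x_1^G, .., x_r^G> for suitable
      x_i in G.  By induction on |G : K|: choose a chief factor M/K of G below
      G'K and apply induction to M.  If the resulting normal subgroup
      A = <K, x_i^G> does not contain M, then M/K cannot be abelian (otherwise G/A is
      abelian and M <= G'K <= A), and replacing x_1 by x_1 m for some
      m in M \ K must succeed: otherwise M <= AA' would make M' <= K
      (nonabelian_chief_cover).
   3. With a Sylow p-subgroup P of G (hence of K), the Frattini argument
      writes x_i = k_i y_i with k_i in K and y_i in N_G(P); the groups
      Q_i = P<y_i> are cyclic-by-p, and the normal subgroup generated by
      their conjugates contains every Sylow p-subgroup, hence K, hence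
      every x_i, hence G  (cyclic_by_p_cover). *)

Section NormalClosureOver.
Variables (gT : finGroupType) (G : {group gT}).
Implicit Types (K W : {group gT}) (X : {set gT}).

Definition nclosure (K X : {set gT}) : {set gT} := <<K :|: class_support X G>>.
Canonical nclosure_group (K X : {set gT}) : {group gT} :=
  Eval hnf in [group of nclosure K X].

Lemma sub_nclosure K X : K \subset nclosure K X.
Proof. exact: subset_trans (subsetUl _ _) (subset_gen _). Qed.

Lemma nclosure_sub_gens K X : X \subset nclosure K X.
Proof.
rewrite (subset_trans (sub_class_support G X)) //.
exact: subset_trans (subsetUr _ _) (subset_gen _).
Qed.

Lemma nclosure_normal K X : K <| G -> X \subset G -> nclosure K X <| G.
Proof.
move=> nsKG sXG; apply/andP; split.
  by rewrite gen_subG subUset normal_sub ?class_support_subG.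
by apply: norms_gen; rewrite normsU ?class_support_norm ?normal_norm.
Qed.

Lemma nclosure_min K W X :
  W <| G -> K \subset W -> X \subset W -> nclosure K X \subset W.
Proof.
move=> nsWG sKW sXW; rewrite gen_subG subUset sKW.
exact: class_support_sub_norm (normal_norm nsWG).
Qed.

End NormalClosureOver.

Section ChiefFactor.
Variables (gT : finGroupType) (G K M : {group gT}).
Hypotheses (nsMG : M <| G) (sKM : K \subset M).
Hypothesis minM : forall L : {group gT},
  L <| G -> K \subset L -> L \subset M -> L :=: K \/ L :=: M.

Lemma chief_meet (B : {group gT}) :
  B <| G -> K \subset B -> ~~ (M \subset B) -> B :&: M = K.
Proof.
move=> nsBG sKB not_sMB.
have sKBM : K \subset B :&: M by rewrite subsetI sKB.
have [//|defBM] := minM (normalI nsBG nsMG) sKBM (subsetIr B M).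
by case/negP: not_sMB; rewrite -defBM subsetIl.
Qed.

(* If M/K is nonabelian and neither A nor B (normal, over K) contains M, then
   AB meets M in K: otherwise M <= AB, while [A, M] and [B, M] lie in K. *)
Lemma nonabelian_chief_cover (A B : {group gT}) :
    ~~ (M^`(1) \subset K) -> A <| G -> B <| G -> K \subset A -> K \subset B ->
    ~~ (M \subset A) -> ~~ (M \subset B) ->
  M :&: (A * B) \subset K.
Proof.
move=> not_sM'K nsAG nsBG sKA sKB not_sMA not_sMB.
have nsnorm (X Y : {group gT}) : X <| G -> Y <| G -> X \subset 'N(Y).
  by move=> nsXG nsYG; rewrite (subset_trans (normal_sub nsXG)) ?normal_norm.
have defAB : A <*> B = A * B by rewrite norm_joinEr ?nsnorm.
have sKABM : K \subset (A <*> B) :&: M by rewrite subsetI sKM (subset_trans sKA) ?joing_subl.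
have [defABM|defABM] := minM (normalI (normalY nsAG nsBG) nsMG) sKABM (subsetIr _ _).
  by rewrite -defAB setIC defABM.
have sMAB : M \subset A * B by rewrite -defAB -defABM subsetIl.
have cAMK : [~: A, M] \subset K.
  by rewrite -(chief_meet nsAG sKA not_sMA) commg_subI // subsetI subxx nsnorm.
have cBMK : [~: B, M] \subset K.
  by rewrite -(chief_meet nsBG sKB not_sMB) commg_subI // subsetI subxx nsnorm.
case/negP: not_sM'K; rewrite derg1 (subset_trans (commSg _ sMAB)) //.
by rewrite commMG ?mul_subG // normsR ?nsnorm.
Qed.

End ChiefFactor.

(* If G = AM with A, M normal and M' <= A, then G/A ~ M/(A :&: M) is
   abelian, so G' <= A. *)
Lemma derived_sub_abelian_cover (gT : finGroupType) (G A M : {group gT}) :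
  A <| G -> M <| G -> M^`(1) \subset A -> G \subset A <*> M -> G^`(1) \subset A.
Proof.
move=> nsAG nsMG sM'A sGAM; apply: der1_min (normal_norm nsAG) _.
have nAM : M \subset 'N(A) by rewrite (subset_trans (normal_sub nsMG)) ?normal_norm.
apply: abelianS (quotientS _ sGAM) _.
by rewrite quotientYidl // sub_der1_abelian.
Qed.

Lemma exists_chief_factor (gT : finGroupType) (G K D : {group gT}) :
    D <| G -> K \proper D ->
  exists2 M : {group gT}, [/\ M <| G, K \proper M & M \subset D] &
    forall L : {group gT}, L <| G -> K \subset L -> L \subset M -> L :=: K \/ L :=: M.
Proof.
move=> nsDG ltKD.
pose above_K (L : {group gT}) := (L <| G) && (K \proper L).
have above_D : above_K D by rewrite /above_K nsDG ltKD.
have [M minM sMD] := mingroup_exists above_D.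
have /andP[nsMG ltKM] := mingroupp minM.
exists M => // L nsLG sKL sLM.
have [ltKL|] := boolP (K \proper L).
  by right; apply: (mingroupP minM).2; rewrite // /above_K nsLG.
rewrite properE sKL negbK /= => sLK.
by left; apply/eqP; rewrite eqEsubset sLK sKL.
Qed.

Section NormalGeneration.
Variables (gT : finGroupType) (r : nat).
Implicit Types (G K M : {group gT}) (x : 'I_r -> gT).

Notation range x := [set x i | i : 'I_r].

Lemma range_sub (G : {set gT}) x : (forall i, x i \in G) -> range x \subset G.
Proof. by move=> Gx; apply/subsetP => _ /imsetP[i _ ->]. Qed.

Lemma chief_step G K M x :
    0 < r -> K <| G -> M <| G -> K \proper M -> M \subset G^`(1) <*> K ->
    (forall L : {group gT}, L <| G -> K \subset L -> L \subset M -> L :=: K \/ L :=: M) ->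
    (forall i, x i \in G) -> G \subset nclosure G M (range x) ->
  exists2 y, (forall i, y i \in G) & G \subset nclosure G K (range y).
Proof.
move=> r_gt0 nsKG nsMG ltKM sMD minM Gx sGMx; have sKM := proper_sub ltKM.
have nsKy y : (forall i, y i \in G) -> nclosure G K (range y) <| G.
  by move=> Gy; rewrite nclosure_normal ?range_sub.
have cover y : (forall i, y i \in G) ->
    M \subset nclosure G K (range y) -> range x \subset nclosure G K (range y) ->
  G \subset nclosure G K (range y).
  by move=> Gy sMA sxA; rewrite (subset_trans sGMx) ?nclosure_min ?nsKy.
set A := nclosure G K (range x).
have [sMA | not_sMA] := boolP (M \subset A).
  by exists x => //; rewrite cover ?nclosure_sub_gens.
have [sM'K | not_sM'K] := boolP (M^`(1) \subset K).
  have sGAM : G \subset A <*> M.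
    rewrite (subset_trans sGMx) // (nclosure_min (normalY (nsKy x Gx) nsMG)) //.
      exact: joing_subr.
    exact: subset_trans (nclosure_sub_gens _ _ _) (joing_subl _ _).
  have sG'A := derived_sub_abelian_cover (nsKy x Gx) nsMG
                 (subset_trans sM'K (sub_nclosure _ _ _)) sGAM.
  by case/negP: not_sMA; rewrite (subset_trans sMD) // join_subG sG'A sub_nclosure.
have [_ [m Mm not_Km]] := properP ltKM.
pose i0 := Ordinal r_gt0; pose x' (i : 'I_r) := if i == i0 then x i * m else x i.
have Gx' i : x' i \in G.
  by rewrite /x'; case: eqP => _; rewrite ?groupM ?Gx // (subsetP (normal_sub nsMG)).
set A' := nclosure G K (range x').
have [sMA' | not_sMA'] := boolP (M \subset A').
  exists x' => //; apply: cover => //; apply/subsetP => _ /imsetP[i _ ->].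
  have A'x'i : x' i \in A' by rewrite (subsetP (nclosure_sub_gens _ _ _)) ?imset_f.
  move: A'x'i; rewrite {1}/x'; case: eqP => // _ A'xm.
  by rewrite -{1}(mulgK m (x i)) groupM ?groupV // (subsetP sMA').
have sMAA'K := nonabelian_chief_cover nsMG sKM minM not_sM'K (nsKy x Gx) (nsKy x' Gx')
  (sub_nclosure _ _ _) (sub_nclosure _ _ _) not_sMA not_sMA'.
have AA'm : m \in A * A'.
  have Ax0 : x i0 \in A by rewrite (subsetP (nclosure_sub_gens _ _ _)) ?imset_f.
  have A'x'0 : x' i0 \in A' by rewrite (subsetP (nclosure_sub_gens _ _ _)) ?imset_f.
  by rewrite -(mulKg (x i0) m) mem_mulg ?groupV //; move: A'x'0; rewrite {1}/x' eqxx.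
by case/negP: not_Km; rewrite (subsetP sMAA'K) // inE Mm.
Qed.

Lemma normal_generation G K g :
    0 < r -> K <| G -> (forall i, g i \in G) ->
    G \subset <<(G^`(1) :|: K) :|: range g>> ->
  exists2 x, (forall i, x i \in G) & G \subset nclosure G K (range x).
Proof.
move=> r_gt0; have [n] := ubnP (#|G| - #|K|).
elim: n K => // n IHn K lt_GK_n nsKG Gg sGg.
have [sG'K | not_sG'K] := boolP (G^`(1) \subset K).
  exists g => //; rewrite (subset_trans sGg) // gen_subG !subUset nclosure_sub_gens.
  by rewrite (subset_trans sG'K) sub_nclosure.
have ltKD : K \proper G^`(1) <*> K.
  rewrite properE joing_subr; apply: contra not_sG'K.
  exact: subset_trans (joing_subl _ _).
have [M [nsMG ltKM sMD] minM] :=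
  exists_chief_factor (normalY (der_normal 1 G) nsKG) ltKD.
have lt_GM_n : #|G| - #|M| < n.
  have ltKG : #|K| < #|G|.
    exact: leq_trans (proper_card ltKM) (subset_leq_card (normal_sub nsMG)).
  exact: leq_trans (ltn_sub2l ltKG (proper_card ltKM)) lt_GK_n.
have sGgM : G \subset <<(G^`(1) :|: M) :|: range g>>.
  by rewrite (subset_trans sGg) // genS // setSU // setUS // proper_sub.
have [x Gx sGMx] := IHn M lt_GM_n nsMG Gg sGgM.
exact: chief_step r_gt0 nsKG nsMG ltKM sMD minM Gx sGMx.
Qed.

Lemma lift_abelianization_gens G K (t : seq (coset_of ((G / K)^`(1)))) :
    K <| G -> size t <= r -> <<[set c in t]>> = (G / K) / (G / K)^`(1) ->
  exists2 g, (forall i, g i \in G) & G \subset <<(G^`(1) :|: K) :|: range g>>.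
Proof.
move=> nsKG le_t_r defGab; set GK := G / K.
have lift (i : 'I_r) : exists2 y, y \in G & coset GK^`(1) (coset K y) = nth 1 t i.
  have : nth 1 t i \in GK / GK^`(1).
    have [lt_i_t | le_t_i] := ltnP i (size t); last by rewrite nth_default ?group1.
    by rewrite -defGab mem_gen // inE mem_nth.
  by case/morphimP => _ _ /morphimP[y _ Gy ->] ->; exists y.
have [g Gg def_g] := fin_all_exists2 lift; exists g => //.
set W := <<_>>.
have sKW : K \subset W by rewrite sub_gen // -setUA subsetU // subsetUl orbT.
have sG'W : G^`(1) \subset W by rewrite sub_gen // -setUA subsetUl.
have sGK'WK : GK^`(1) \subset W / K by rewrite -quotient_der ?quotientS ?normal_norm.
rewrite -(quotientSGK (normal_norm nsKG) sKW).
rewrite -(quotientSGK (normal_norm (der_normal 1 GK)) sGK'WK) -defGab gen_subG.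
apply/subsetP => c; rewrite inE => t_c.
have lt_c_r : index c t < r by rewrite (leq_trans _ le_t_r) ?index_mem.
rewrite -(nth_index 1 t_c) -[index c t]/(nat_of_ord (Ordinal lt_c_r)) -def_g.
by rewrite !mem_quotient // mem_gen // inE imset_f ?orbT.
Qed.

End NormalGeneration.

(* p(G) is normal in G and is the least normal subgroup containing a given
   Sylow p-subgroup, all Sylow p-subgroups being conjugate. *)
Section SylowGenerated.
Variables (gT : finGroupType) (p : nat) (G : {group gT}).

Lemma pSylGen_normal : pSylGen p G <| G.
Proof.
apply/andP; split.
  by rewrite gen_subG; apply/bigcupsP => P; rewrite inE => /pHall_sub.
apply: norms_gen; apply/subsetP => y Gy; rewrite inE.
apply/subsetP => _ /imsetP[z /bigcupP[P sylP Pz] ->]; rewrite inE in sylP.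
by apply/bigcupP; exists (P :^ y)%G; rewrite ?inE /= ?pHallJ ?memJ_conjg.
Qed.

Lemma Sylow_sub_pSylGen (P : {group gT}) : p.-Sylow(G) P -> P \subset pSylGen p G.
Proof. by move=> sylP; rewrite sub_gen // (bigcup_sup P) ?inE. Qed.

Lemma pSylGen_min (P W : {group gT}) :
  p.-Sylow(G) P -> W <| G -> P \subset W -> pSylGen p G \subset W.
Proof.
move=> sylP nsWG sPW; rewrite gen_subG; apply/bigcupsP => P'; rewrite inE => sylP'.
have [g Gg ->] := Sylow_trans sylP sylP'.
by rewrite -(normsP (normal_norm nsWG) g Gg) conjSg.
Qed.

End SylowGenerated.

Lemma Frattini_factor (gT : finGroupType) (p : nat) (G K P : {group gT}) x :
  K <| G -> p.-Sylow(K) P -> x \in G -> exists2 y, y \in 'N_G(P) & x * y^-1 \in K.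
Proof.
move=> nsKG sylP Gx; have : x \in K * 'N_G(P) by rewrite (Frattini_arg nsKG sylP).
by case/mulsgP => k y Kk Ny ->; exists y; rewrite ?mulgK.
Qed.

Lemma cyclic_by_p_cycle_ext (gT : finGroupType) (p : nat) (P : {group gT}) y :
  p.-group P -> y \in 'N(P) -> cyclic_by_p p (P <*> <[y]>)%G.
Proof.
move=> pP Ny; exists P; split=> //.
  by rewrite /normal joing_subl join_subG normG cycle_subG.
by rewrite /= quotientYidl ?cycle_subG // quotient_cyclic ?cycle_cyclic.
Qed.

Lemma conj_closure_gen_normal (gT : finGroupType) (G : {group gT}) r
    (Q : 'I_r -> {group gT}) :
  (forall i, Q i \subset G) -> <<\bigcup_(i < r) conj_closure (Q i) G>> <| G.
Proof.
move=> sQG; have defQG i : conj_closure (Q i) G = class_support (Q i) G.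
  by rewrite class_supportEr.
apply/andP; split.
  by rewrite gen_subG; apply/bigcupsP => i _; rewrite defQG class_support_subG.
apply: norms_gen; apply: norms_bigcup; apply/bigcapsP => i _.
by rewrite defQG class_support_norm.
Qed.

Lemma cyclic_by_p_cover (gT : finGroupType) (G : {group gT}) (p r : nat)
    (x : 'I_r -> gT) :
    0 < r -> (forall i, x i \in G) ->
    G \subset nclosure G (pSylGen p G) [set x i | i : 'I_r] ->
  exists Q : 'I_r -> {group gT},
    (forall i, Q i \subset G /\ cyclic_by_p p (Q i)) /\
    G :=: <<\bigcup_(i < r) conj_closure (Q i) G>>.
Proof.
move=> r_gt0 Gx sGx; set K := [group of pSylGen p G].
have nsKG : K <| G := pSylGen_normal p G.
have [P sylP] := Sylow_exists p G.
have sylKP : p.-Sylow(K) P := pHall_subl (Sylow_sub_pSylGen sylP) (normal_sub nsKG) sylP.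
have [y Ny Kxy] := fin_all_exists2 (fun i => Frattini_factor nsKG sylKP (Gx i)).
pose Q i := (P <*> <[y i]>)%G.
have sQG i : Q i \subset G.
  by have /setIP[Gy _] := Ny i; rewrite join_subG (pHall_sub sylP) cycle_subG.
exists Q; split=> [i | ].
  have /setIP[_ NPy] := Ny i.
  by split; [exact: sQG | exact: cyclic_by_p_cycle_ext (pHall_pgroup sylP) NPy].
set W := <<_>>; have nsWG : W <| G := conj_closure_gen_normal sQG.
have sQW i : Q i \subset W.
  by rewrite sub_gen // (bigcup_max i) // (bigcup_max 1) ?group1 ?conjsg1.
have sPW : P \subset W := subset_trans (joing_subl _ _) (sQW (Ordinal r_gt0)).
have sKW : K \subset W := pSylGen_min sylP nsWG sPW.
apply/eqP; rewrite eqEsubset (normal_sub nsWG) andbT (subset_trans sGx) //.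
rewrite nclosure_min //; apply/subsetP => _ /imsetP[i _ ->].
rewrite -(mulgKV (y i) (x i)) groupM //; first exact: subsetP sKW _ (Kxy i).
exact: subsetP (sQW i) _ (subsetP (joing_subr _ _) _ (cycle_id _)).
Qed.

Theorem mainTheorem5 (gT : finGroupType) (G : {group gT}) (p : nat) :
  prime p ->
  let r := maxn (dgen (abelianization (G / pSylGen p G)%G)) 1 in
  exists Q : 'I_r -> {group gT},
    (forall i, Q i \subset G /\ cyclic_by_p p (Q i)) /\
    G :=: <<\bigcup_(i < r) conj_closure (Q i) G>>.
Proof.
move=> _ r; set K := [group of pSylGen p G].
have nsKG : K <| G := pSylGen_normal p G.
have /existsP[t /andP[_ /eqP defGab]] :
    has_gen_of_size (abelianization (G / K)%G) (dgen (abelianization (G / K)%G)).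
  by rewrite /dgen; case: ex_minnP.
have le_t_r : size t <= r by rewrite size_tuple leq_maxl.
have r_gt0 : 0 < r := leq_maxr _ _.
have [g Gg sGg] := lift_abelianization_gens nsKG le_t_r defGab.
have [x Gx sGx] := normal_generation r_gt0 nsKG Gg sGg.
exact: cyclic_by_p_cover r_gt0 Gx sGx.
Qed.
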